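(* Let $n=4$ and let $T$ be a tree metric on the taxa $\{i,j,k,l\}=\{1,2,3,4\}$ realized by the quartet tree $(ij|kl)$: the leaves $i,j$ are attached to one endpoint of an internal edge of weight $g>0$, the leaves $k,l$ to its other endpoint, and the pendant edges to the leaves $i,j,k,l$ have positive weights $e_i,e_j,e_k,e_l$. Then $T$ is a tropical mixture $D\oplus \bar D$ of two star tree metrics $D,\bar D$ if and only if $e_i,e_j>g$ or $e_k,e_l>g$. Moreover, consider the fiber over $T$, i.e. the set of ordered pairs $(D,\bar D)$ of star tree metrics with $D\oplus\bar D=T$, each pair recorded by its $8$ edge weights in $\mathbb{R}_+^8$. If exactly one of the two pairs of inequalities holds, the fiber consists of four pairwise disjoint $2$-dimensional families of pairs $(D,\bar D)$, each corresponding to a $2$-dimensional polygon in $\mathbb{R}_+^8$, together with their orbits under the action of $\mathfrak{S}_2$ swapping $D$ and $\bar D$; all these orbits have size $2$. If both pairs of inequalities hold, the two collections of families are disjoint and the fiber consists of eight families of $2$-dimensional polygons together with their orbits; moreover there is a one-to-one correspondence between the two sets of four families, after suitably relabeling the leaves of the resulting trees.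
   Context: A dissimilarity map on $n$ taxa is a symmetric matrix $D\in\mathbb{R}_{\ge 0}^{n\times n}$ with zero diagonal. A weighted tree on $n$ taxa is a tree with leaves labeled $1,\dots,n$ and nonnegative edge weights; its tree metric is $d(i,j)=$ sum of the weights along the unique path from $i$ to $j$. A star tree metric is the tree metric of a star tree (a single internal vertex adjacent to all $n$ leaves) all of whose $n$ edges have strictly positive weights; thus $D_{pq}=w_p+w_q$ for $p\neq q$ with all $w_p>0$. The tropical mixture of two dissimilarity maps is the entrywise maximum: $(D\oplus\bar D)_{pq}=\max\{D_{pq},\bar D_{pq}\}$. *)

From HB Require Import structures.
From mathcomp Require Import all_boot all_order all_algebra all_fingroup.
From mathcomp Require Import reals.
Set Implicit Arguments. Unset Strict Implicit. Unset Printing Implicit Defensive.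
Import Order.TTheory GRing.Theory Num.Theory.
Local Open Scope ring_scope.

(* Taxa are the four leaves 'I_4 = {0,1,2,3} (standing for {1,2,3,4}). *)

Definition dmap (R : realType) := 'I_4 -> 'I_4 -> R.

Definition star_metric (R : realType) (w : {ffun 'I_4 -> R}) : dmap R :=
  fun p q => if p == q then 0 else w p + w q.

Definition is_star_metric (R : realType) (D : dmap R) : Prop :=
  exists w : {ffun 'I_4 -> R}, (forall p, 0 < w p) /\
    forall p q, D p q = star_metric w p q.

Definition tmix (R : realType) (D Db : dmap R) : dmap R :=
  fun p q => Num.max (D p q) (Db p q).

Definition is_mixture_of_two_stars (R : realType) (T : dmap R) : Prop :=
  exists D Db : dmap R, is_star_metric D /\ is_star_metric Db /\
    forall p q, T p q = tmix D Db p q.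

(** Tree metric of the quartet tree (ij|kl): leaves i,j hang off one end of
    an internal edge of weight g, leaves k,l off the other end; the pendant
    edge to leaf p has weight e p.  Path length between p <> q is
    e p + e q, plus g iff p and q lie on different sides of the split
    {i,j} | {k,l}. *)
Definition quartet_metric (R : realType) (i j : 'I_4) (e : {ffun 'I_4 -> R})
    (g : R) : dmap R :=
  fun p q => if p == q then 0 else
    e p + e q + (if ((p == i) || (p == j)) == ((q == i) || (q == j))
                 then 0 else g).

(** A point of R^8: the 8 edge weights of a pair (D, Db) of star trees. *)
Definition pt (R : realType) := ({ffun 'I_4 -> R} * {ffun 'I_4 -> R})%type.

Definition fiber (R : realType) (T : dmap R) (x : pt R) : Prop :=
  (forall p, 0 < x.1 p) /\ (forall p, 0 < x.2 p) /\
  forall p q, T p q = tmix (star_metric x.1) (star_metric x.2) p q.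

Definition swap_pt (R : realType) (x : pt R) : pt R := (x.2, x.1).

Definition relabel_w (R : realType) (pi : {perm 'I_4}) (w : {ffun 'I_4 -> R})
  : {ffun 'I_4 -> R} := [ffun p => w ((pi^-1)%g p)].
Definition relabel_pt (R : realType) (pi : {perm 'I_4}) (x : pt R) : pt R :=
  (relabel_w pi x.1, relabel_w pi x.2).

Definition aff_pt (R : realType) (x0 u v : pt R) (s t : R) : pt R :=
  ([ffun p => x0.1 p + s * u.1 p + t * v.1 p],
   [ffun p => x0.2 p + s * u.2 p + t * v.2 p]).

Definition in_region (R : realType) (cs : seq (R * R * R * bool)) (s t : R)
  : bool :=
  all (fun c : R * R * R * bool =>
         let: (a, b, d, strict) := c in
         if strict then a * s + b * t < d else a * s + b * t <= d) cs.

(** A 2-dimensional polygon in R^8: the image, under an injective affine map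
    R^2 -> R^8, of a bounded region of R^2 defined by finitely many (weak or
    strict) linear inequalities and containing three non-collinear points
    (so that it is genuinely 2-dimensional). Faces may be open or closed. *)
Definition polygon2 (R : realType) (P : pt R -> Prop) : Prop :=
  exists (x0 u v : pt R) (cs : seq (R * R * R * bool)),
    (forall a b : R, (forall p, a * u.1 p + b * v.1 p = 0 /\
                                a * u.2 p + b * v.2 p = 0) -> a = 0 /\ b = 0) /\
    (exists M : R, forall s t, in_region cs s t -> `|s| <= M /\ `|t| <= M) /\
    (exists s1 t1 s2 t2 s3 t3 : R,
        [/\ in_region cs s1 t1, in_region cs s2 t2, in_region cs s3 t3 &
            (s2 - s1) * (t3 - t1) - (s3 - s1) * (t2 - t1) != 0]) /\
    (forall x, P x <-> exists s t, in_region cs s t /\ x = aff_pt x0 u v s t).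

Definition fiber_decomp (R : realType) (T : dmap R) (I : finType)
    (F : I -> pt R -> Prop) : Prop :=
  [/\ (forall a, polygon2 (F a)),
      (forall (a b : I) (s t : bool), (a, s) != (b, t) -> forall x : pt R,
          ~ ((if s then F a (swap_pt x) else F a x) /\
             (if t then F b (swap_pt x) else F b x))),
      (forall x, fiber T x <-> exists a, F a x \/ F a (swap_pt x)) &
      (forall x, fiber T x -> swap_pt x <> x)].

From HB Require Import structures.
From mathcomp Require Import all_boot all_order all_algebra all_fingroup.
From mathcomp Require Import reals.
From mathcomp Require Import ring lra.
From Stdlib Require Import FunctionalExtensionality.
Set Implicit Arguments. Unset Strict Implicit. Unset Printing Implicit Defensive.
Import Order.TTheory GRing.Theory Num.Theory.
Local Open Scope ring_scope.

(* Write the weights of the two stars as w = e + a and v = e + b.  Then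
   T = D (+) Db says that max (a p + a q) (b p + b q) is 0 on the cherries
   {i, j}, {k, l} and g on the four cross pairs.  As g > 0, each star
   realizes the two cross distances from a single leaf, and these two leaves
   lie in the same cherry; say D realizes them from i and Db from j.  The
   cherry equations then force a i, b j >= g with equality for at least one
   of them, and one of the two stars realizes d(i, j).  Which of a i, b j
   equals g and which star realizes d(i, j) (ties broken once and for all)
   give four two-parameter families.  Positivity of e j + a j and e i + b i
   forces g < e i and g < e j, and conversely these inequalities make each
   family a nondegenerate polygon.  The three other cases arise by swapping
   the stars and/or the cherries, and no point lies in two of them. *)

Lemma max_eqP (R : realDomainType) (A B c : R) :
  Num.max A B = c <-> A <= c /\ B <= c /\ (A = c \/ B = c).
Proof. by split=> [<-|[hA [hB hAB]]]; case: (lerP A B) => ?; lra. Qed.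

Lemma max_translate (R : realDomainType) (A B c A' B' c' : R) :
  Num.max A B = c -> A' - c' = A - c -> B' - c' = B - c -> Num.max A' B' = c'.
Proof.
move=> eAB eA eB.
by rewrite -[A'](subrK c') -[B'](subrK c') eA eB -!addr_maxl eAB subrr add0r.
Qed.

Section Deviations.

Variables (R : realDomainType) (T : Type) (i j k l : T) (e : T -> R) (g : R).
Variables (a b : T -> R).

Definition positive_stars : Prop :=
  (0 < e i + a i /\ 0 < e j + a j /\ 0 < e k + a k /\ 0 < e l + a l) /\
  (0 < e i + b i /\ 0 < e j + b j /\ 0 < e k + b k /\ 0 < e l + b l).

Definition mixture_eqs : Prop :=
  (Num.max (a i + a j) (b i + b j) = 0 /\ Num.max (a k + a l) (b k + b l) = 0) /\
  (Num.max (a i + a k) (b i + b k) = g /\ Num.max (a i + a l) (b i + b l) = g /\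
   Num.max (a j + a k) (b j + b k) = g /\ Num.max (a j + a l) (b j + b l) = g).

Definition anchored : Prop :=
  a i + a k = g /\ a i + a l = g /\ b j + b k = g /\ b j + b l = g.

Definition deviation_family (m : nat) : Prop :=
  positive_stars /\ anchored /\
  match m with
  | 0 => a i = g /\ a j = - g /\ g <= b j /\ b i < - b j
  | 1 => a i = g /\ b i = - b j /\ g <= b j /\ a j <= - g
  | 2 => b j = g /\ b i = - g /\ g < a i /\ a j < - a i
  | _ => b j = g /\ a j = - a i /\ g < a i /\ b i <= - g
  end.

Lemma deviation_family_cherries_nonpos m : deviation_family m ->
  a i + a j <= 0 /\ b i + b j <= 0 /\ a k + a l <= 0 /\ b k + b l <= 0.
Proof. by case: m => [|[|[|m]]] [_ [A F]]; rewrite /anchored in A; lra. Qed.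

Lemma deviation_family_mixture_eqs m : 0 < g -> deviation_family m -> mixture_eqs.
Proof.
move=> g_gt0 [_ [A F]]; rewrite /anchored in A.
by case: m F => [|[|[|m]]] F; do !split; apply/max_eqP; lra.
Qed.

Lemma deviation_family_unique (m m' : 'I_4) :
  deviation_family m -> deviation_family m' -> m = m'.
Proof.
case=> _ [_ F] [_ [_ F']]; apply: val_inj.
by case: m F => [[|[|[|[|?]]]] ?] //; case: m' F' => [[|[|[|[|?]]]] ?] //= *;
  exfalso; lra.
Qed.

Lemma deviation_family_pendant_gt m : deviation_family m -> g < e i /\ g < e j.
Proof. by case: m => [|[|[|m]]] [P [A F]]; rewrite /positive_stars in P; lra. Qed.

Lemma anchored_deviation_family : positive_stars -> mixture_eqs -> anchored ->
  exists m : 'I_4, deviation_family m.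
Proof.
move=> P [[/max_eqP Eij /max_eqP Ekl] _] A; have A' := A; rewrite /anchored in A'.
have [ai_le|ai_gt] := lerP (a i) g.
- have [bij_lt|bij_ge] := ltrP (b i + b j) 0.
  + by exists (@Ordinal 4 0 isT); do !split => //=; lra.
  + by exists (@Ordinal 4 1 isT); do !split => //=; lra.
- have [aij_lt|aij_ge] := ltrP (a i + a j) 0.
  + by exists (@Ordinal 4 2 isT); do !split => //=; lra.
  + by exists (@Ordinal 4 3 isT); do !split => //=; lra.
Qed.

End Deviations.

Section Anchorings.

Variables (R : realDomainType) (T : Type) (i j k l : T) (e : T -> R) (g : R).
Variables (a b : T -> R).

Lemma mixture_eqs_anchored : 0 < g -> mixture_eqs i j k l g a b ->
  [\/ anchored i j k l g a b, anchored i j k l g b a,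
      anchored k l i j g a b | anchored k l i j g b a].
Proof.
(* Of the 16 ways to attain the four cross maxima, all but the four
   anchorings contradict the cherry inequalities. *)
rewrite /anchored => g_gt0 [[/max_eqP Eij /max_eqP Ekl]].
move=> [/max_eqP [? [? [ik|ik]]] [/max_eqP [? [? [il|il]]]
        [/max_eqP [? [? [jk|jk]]] /max_eqP [? [? [jl|jl]]]]]];
  first [by constructor 1; lra | by constructor 2; lra | by constructor 3; lra
        | by constructor 4; lra | exfalso; lra].
Qed.

Lemma deviation_family_other_anchorings m m' : 0 < g ->
  deviation_family i j k l e g a b m ->
  [/\ ~ deviation_family i j k l e g b a m', ~ deviation_family k l i j e g a b m'
    & ~ deviation_family k l i j e g b a m'].
Proof.
move=> g_gt0 F; have [_ [A _]] := F; have := deviation_family_cherries_nonpos F.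
by rewrite /anchored in A; split=> -[_ [A' _]]; rewrite /anchored in A'; lra.
Qed.

End Anchorings.

Lemma uniq4_neq (i j k l : 'I_4) : uniq [:: i; j; k; l] ->
  ((i == j) = false) * ((i == k) = false) * ((i == l) = false) *
  ((j == k) = false) * ((j == l) = false) * ((k == l) = false) *
  ((j == i) = false) * ((k == i) = false) * ((l == i) = false) *
  ((k == j) = false) * ((l == j) = false) * ((l == k) = false).
Proof.
rewrite /= !inE !negb_or !andbT -!andbA.
case/and4P=> /negbTE ij /negbTE ik /negbTE il /and3P[/negbTE jk /negbTE jl /negbTE kl].
by rewrite ![j == i]eq_sym ![k == i]eq_sym ![l == i]eq_sym ![k == j]eq_sym
  ![l == j]eq_sym ![l == k]eq_sym ij ik il jk jl kl.
Qed.

Lemma uniq4_cover (i j k l p : 'I_4) : uniq [:: i; j; k; l] ->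
  [\/ p = i, p = j, p = k | p = l].
Proof.
move=> Hu; have : p \in [:: i; j; k; l].
  have sub4 : {subset [:: i; j; k; l] <= enum 'I_4} by move=> q; rewrite mem_enum.
  by rewrite (uniq_min_size Hu sub4 _).2 ?mem_enum ?size_enum_ord.
by rewrite !inE => /or4P [] /eqP ->;
  [constructor 1 | constructor 2 | constructor 3 | constructor 4].
Qed.

Lemma uniq4_swap_cherries (i j k l : 'I_4) :
  uniq [:: i; j; k; l] -> uniq [:: k; l; i; j].
Proof.
have perm_kl_ij : perm_eq [:: k; l; i; j] [:: i; j; k; l].
  by rewrite (perm_catC [:: k; l]).
by rewrite (perm_uniq perm_kl_ij).
Qed.

Definition quad (R : Type) (i j k l : 'I_4) (x y z w : R) : {ffun 'I_4 -> R} :=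
  [ffun p => if p == i then x else if p == j then y else if p == k then z else w].

Lemma quadE (R : Type) (i j k l : 'I_4) (x y z w : R) : uniq [:: i; j; k; l] ->
  (quad i j k l x y z w i = x) * (quad i j k l x y z w j = y) *
  (quad i j k l x y z w k = z) * (quad i j k l x y z w l = w).
Proof. by move=> Hu; rewrite !ffunE ?eqxx !(uniq4_neq Hu). Qed.

Lemma aff_ptE (R : realType) (x0 u v : pt R) s t p :
  ((aff_pt x0 u v s t).1 p = x0.1 p + s * u.1 p + t * v.1 p) *
  ((aff_pt x0 u v s t).2 p = x0.2 p + s * u.2 p + t * v.2 p).
Proof. by rewrite !ffunE. Qed.

Lemma in_region_triangle (R : realType) (cs : seq (R * R * R * bool)) (s t q : R) :
  q != 0 -> in_region cs s t -> in_region cs (s + q) t -> in_region cs s (t + q) ->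
  exists s1 t1 s2 t2 s3 t3 : R,
    [/\ in_region cs s1 t1, in_region cs s2 t2, in_region cs s3 t3 &
        (s2 - s1) * (t3 - t1) - (s3 - s1) * (t2 - t1) != 0].
Proof.
move=> q_neq0 r1 r2 r3; exists s, t, (s + q), t, s, (t + q); split => //.
have -> : (s + q - s) * (t + q - t) - (s - s) * (t - t) = q * q by ring.
by rewrite mulf_neq0.
Qed.

Lemma exists_small_pos (R : realFieldType) (a b c d : R) :
  0 < a -> 0 < b -> 0 < c -> 0 < d ->
  exists q : R, 0 < q /\ 4 * q <= a /\ 4 * q <= b /\ 4 * q <= c /\ 4 * q <= d.
Proof.
move=> a_gt0 b_gt0 c_gt0 d_gt0.
pose h := Num.min (Num.min a b) (Num.min c d).
have h_gt0 : 0 < h by rewrite !lt_min a_gt0 b_gt0 c_gt0 d_gt0.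
have : h <= a /\ h <= b /\ h <= c /\ h <= d by rewrite !ge_min !lexx !orbT.
by exists (h / 4); lra.
Qed.

Lemma polygon2_inhabited (R : realType) (P : pt R -> Prop) :
  polygon2 P -> exists x, P x.
Proof.
case=> x0 [u [v [cs [_ [_ [[s [t [_ [_ [_ [_ [r _ _ _]]]]]]] PE]]]]]].
by exists (aff_pt x0 u v s t); apply/PE; exists s, t.
Qed.

Section Fibers.

Variables (R : realType) (T : dmap R).

Lemma mixture_fiberP : is_mixture_of_two_stars T <-> exists x, fiber T x.
Proof.
split=> [[D [Db [[w [w_gt0 Dw]] [[v [v_gt0 Dbv]] DT]]]] | [x [x1_gt0 [x2_gt0 Tx]]]].
- by exists (w, v); split; [|split] => // p q; rewrite DT /tmix Dw Dbv.
- exists (star_metric x.1), (star_metric x.2).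
  by do !split => //; [exists x.1 | exists x.2].
Qed.

Lemma swap_ptK : involutive (@swap_pt R).
Proof. by case. Qed.

Lemma fiber_swap x : fiber T x -> fiber T (swap_pt x).
Proof.
by case=> x1_gt0 [x2_gt0 Tx]; split; [|split] => // p q; rewrite Tx /tmix maxC.
Qed.

Lemma fiber_decomp_intro (I : finType) (F : I -> pt R -> Prop) :
  (forall a, polygon2 (F a)) ->
  (forall a b x, F a x -> F b x -> a = b) ->
  (forall a b x, F a x -> ~ F b (swap_pt x)) ->
  (forall x, fiber T x <-> exists a, F a x \/ F a (swap_pt x)) ->
  (forall x, fiber T x -> swap_pt x <> x) ->
  fiber_decomp T F.
Proof.
move=> Fpoly Funiq Fswap Fcover Fnofix; split => // a b [] [] ab x [Fa Fb].
- by move: ab; rewrite (Funiq _ _ _ Fa Fb) eqxx.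
- exact: Fswap Fb Fa.
- exact: Fswap Fa Fb.
- by move: ab; rewrite (Funiq _ _ _ Fa Fb) eqxx.
Qed.

End Fibers.

Section Quartet.

Variables (R : realType) (i j k l : 'I_4) (e : {ffun 'I_4 -> R}) (g : R).
Hypothesis Hu : uniq [:: i; j; k; l].

Definition fiber_family (m : 'I_4) (x : pt R) : Prop :=
  deviation_family i j k l e g (fun p => x.1 p - e p) (fun p => x.2 p - e p) m.

Lemma fiber_quartetE x : fiber (quartet_metric i j e g) x <->
  positive_stars i j k l e (fun p => x.1 p - e p) (fun p => x.2 p - e p) /\
  mixture_eqs i j k l g (fun p => x.1 p - e p) (fun p => x.2 p - e p).
Proof.
rewrite /positive_stars /mixture_eqs /= !subrKC.
have maxT p q : p != q -> fiber (quartet_metric i j e g) x ->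
    Num.max (x.1 p + x.1 q) (x.2 p + x.2 q) = quartet_metric i j e g p q.
  by move=> /negbTE pq [_ [_ ->]]; rewrite /tmix /star_metric pq.
split=> [xT | [[[? [? [? ?]]] [? [? [? ?]]]] [[? ?] [? [? [? ?]]]]]].
- have [x1_gt0 [x2_gt0 _]] := xT; do !split => //;
  [ apply: (max_translate (maxT i j _ xT)) | apply: (max_translate (maxT k l _ xT))
  | apply: (max_translate (maxT i k _ xT)) | apply: (max_translate (maxT i l _ xT))
  | apply: (max_translate (maxT j k _ xT)) | apply: (max_translate (maxT j l _ xT)) ];
  rewrite ?(uniq4_neq Hu) // /quartet_metric ?eqxx ?(uniq4_neq Hu) /=; ring.
- split; [|split] => [p|p|p q]; case: (uniq4_cover p Hu) => ->; try done;
    case: (uniq4_cover q Hu) => ->;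
    rewrite /quartet_metric /tmix /star_metric ?eqxx ?(uniq4_neq Hu) /= ?maxxx //;
    symmetry; match goal with
    | E : Num.max _ _ = _ |- _ => by apply: (max_translate E); ring
    end.
Qed.

Lemma quartet_metric_swap_cherries :
  quartet_metric k l e g = quartet_metric i j e g.
Proof.
apply: functional_extensionality => p; apply: functional_extensionality => q.
by case: (uniq4_cover p Hu) => ->; case: (uniq4_cover q Hu) => ->;
  rewrite /quartet_metric ?eqxx ?(uniq4_neq Hu).
Qed.

Lemma fiber_family_fiber m x : 0 < g ->
  fiber_family m x -> fiber (quartet_metric i j e g) x.
Proof.
move=> g_gt0 F; apply/fiber_quartetE.
by split; [case: F | apply: deviation_family_mixture_eqs F].
Qed.

Lemma fiber_anchored_family x : fiber (quartet_metric i j e g) x ->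
  anchored i j k l g (fun p => x.1 p - e p) (fun p => x.2 p - e p) ->
  exists m, fiber_family m x.
Proof. by case/fiber_quartetE=> P M; apply: anchored_deviation_family P M. Qed.

Lemma fiber_swap_neq x : 0 < g -> fiber (quartet_metric i j e g) x -> swap_pt x <> x.
Proof.
move=> g_gt0 /fiber_quartetE [_ [[Eij Ekl] [Eik [_ [_ Ejl]]]]].
case: x Eij Ekl Eik Ejl => w v /= Eij Ekl Eik Ejl [vw _].
by rewrite vw !maxxx in Eij Ekl Eik Ejl; lra.
Qed.

(* The family [m] is the image of [chart_region m] under the affine map
   (s, t) |-> origin + s * u + t * v, where [chart m] = (origin, u, v) and
   [chart_coords m] recovers (s, t) from a point of the family. *)
Definition chart (m : nat) : pt R * pt R * pt R :=
  let shift x y z w := quad i j k l (e i + x) (e j + y) (e k + z) (e l + w) in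
  let zero := quad i j k l 0 0 0 0 in
  match m with
  | 0 => ((shift g (- g) 0 0, shift 0 0 g g),
          (zero, quad i j k l 0 1 (-1) (-1)), (zero, quad i j k l 1 0 0 0))
  | 1 => ((shift g 0 0 0, shift 0 0 g g),
          (zero, quad i j k l (-1) 1 (-1) (-1)), (quad i j k l 0 1 0 0, zero))
  | 2 => ((shift 0 0 g g, shift (- g) g 0 0),
          (quad i j k l 1 0 (-1) (-1), zero), (quad i j k l 0 1 0 0, zero))
  | _ => ((shift 0 0 g g, shift 0 g 0 0),
          (quad i j k l 1 (-1) (-1) (-1), zero), (zero, quad i j k l 1 0 0 0))
  end.

Definition chart_region (m : nat) : seq (R * R * R * bool) :=
  match m with
  | 0 => [:: (-1, 0, - g, false); (1, 1, 0, true); (0, -1, e i, true);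
             (1, 0, e k + g, true); (1, 0, e l + g, true)]
  | 1 => [:: (-1, 0, - g, false); (0, 1, - g, false); (1, 0, e i, true);
             (0, -1, e j, true); (1, 0, e k + g, true); (1, 0, e l + g, true)]
  | 2 => [:: (-1, 0, - g, true); (1, 1, 0, true); (0, -1, e j, true);
             (1, 0, e k + g, true); (1, 0, e l + g, true)]
  | _ => [:: (-1, 0, - g, true); (0, 1, - g, false); (1, 0, e j, true);
             (0, -1, e i, true); (1, 0, e k + g, true); (1, 0, e l + g, true)]
  end.

Definition chart_coords (m : nat) (x : pt R) : R * R :=
  let a p := x.1 p - e p in let b p := x.2 p - e p in
  match m with
  | 0 => (b j, b i)
  | 1 => (b j, a j)
  | 2 => (a i, a j)
  | _ => (a i, b i)
  end.

Lemma fiber_family_chart (m : 'I_4) x :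
  (forall p, 0 < e p) -> 0 < g -> g < e i -> g < e j ->
  fiber_family m x <-> exists s t, in_region (chart_region m) s t /\
    x = aff_pt (chart m).1.1 (chart m).1.2 (chart m).2 s t.
Proof.
move=> e_gt0 g_gt0 gi gj.
have := e_gt0 i; have := e_gt0 j; have := e_gt0 k; have := e_gt0 l; clear e_gt0.
rewrite /fiber_family /deviation_family /positive_stars /anchored.
move=> el_gt0 ek_gt0 ej_gt0 ei_gt0; split=> [F|[s [t [r ->]]]].
- exists (chart_coords m x).1, (chart_coords m x).2; split.
    by case: m F => [[|[|[|[|?]]]] ?] //= F; rewrite /in_region /=; lra.
  case: x F => w v [_ F]; congr pair; apply/ffunP => p; rewrite aff_ptE;
    case: (uniq4_cover p Hu) => ->; case: m F => [[|[|[|[|?]]]] ?] //= F;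
    by rewrite !(quadE _ _ _ _ Hu); clear -F; lra.
- by case: m r => [[|[|[|[|?]]]] ?] //;
    rewrite /in_region !aff_ptE /= !(quadE _ _ _ _ Hu); lra.
Qed.

Lemma fiber_family_polygon m :
  (forall p, 0 < e p) -> 0 < g -> g < e i -> g < e j ->
  polygon2 (fiber_family m).
Proof.
move=> e_gt0 g_gt0 gi gj.
have := e_gt0 i; have := e_gt0 j; have := e_gt0 k; have := e_gt0 l.
move=> el_gt0 ek_gt0 ej_gt0 ei_gt0.
have [q [q_gt0 q_small]] : exists q : R,
    0 < q /\ 4 * q <= e i - g /\ 4 * q <= e j - g /\ 4 * q <= e k /\ 4 * q <= e l.
  by apply: exists_small_pos; rewrite ?subr_gt0.
exists (chart m).1.1, (chart m).1.2, (chart m).2, (chart_region m).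
split; last split; last split.
- move=> s t /[dup] /(_ i) + /(_ j).
  by case: m => [[|[|[|[|?]]]] ?] //=; rewrite !(quadE _ _ _ _ Hu); lra.
- exists (e i + e j + e k + e l + g) => s t.
  by case: m => [[|[|[|[|?]]]] ?] //; rewrite /in_region /= !ler_norml; lra.
- (* The corner (g + q, - g - 3 q) and its two q-translates lie in every
     region, by the choice of q. *)
  apply: (@in_region_triangle _ _ (g + q) (- g - 3 * q) q (lt0r_neq0 q_gt0));
    by case: m => [[|[|[|[|?]]]] ?] //; rewrite /in_region /=; lra.
- by move=> x; apply: fiber_family_chart.
Qed.

End Quartet.

Section Relabel.

Variables (R : realType) (pi : {perm 'I_4}).

Lemma relabel_wE (w : {ffun 'I_4 -> R}) p : relabel_w pi w (pi p) = w p.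
Proof. by rewrite /relabel_w ffunE permK. Qed.

Lemma relabel_ptK (x : pt R) : relabel_pt pi (relabel_pt pi^-1 x) = x.
Proof.
by case: x => w v; congr pair; apply/ffunP => p; rewrite !ffunE invgK permKV.
Qed.

Lemma fiber_family_relabel_pt i j k l e g m (y : pt R) :
  fiber_family (pi i) (pi j) (pi k) (pi l) (relabel_w pi e) g m (relabel_pt pi y) <->
  fiber_family i j k l e g m y.
Proof.
by rewrite /fiber_family /deviation_family /positive_stars /anchored /= !relabel_wE.
Qed.

Lemma fiber_family_relabel i j k l e g m (x : pt R) :
  fiber_family (pi i) (pi j) (pi k) (pi l) (relabel_w pi e) g m x <->
  exists y, fiber_family i j k l e g m y /\ x = relabel_pt pi y.
Proof.
split=> [F | [y [F ->]]]; last exact/fiber_family_relabel_pt.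
exists (relabel_pt pi^-1 x); rewrite relabel_ptK; split => //.
by apply/fiber_family_relabel_pt; rewrite relabel_ptK.
Qed.

End Relabel.

Section Classification.

Variables (R : realType) (i j k l : 'I_4) (e : {ffun 'I_4 -> R}) (g : R).
Hypothesis Hu : uniq [:: i; j; k; l].

Lemma fiber_classify x : 0 < g -> fiber (quartet_metric i j e g) x ->
  [\/ exists m, fiber_family i j k l e g m x,
      exists m, fiber_family i j k l e g m (swap_pt x),
      exists m, fiber_family k l i j e g m x
    | exists m, fiber_family k l i j e g m (swap_pt x)].
Proof.
move=> g_gt0 xT; have Hu' := uniq4_swap_cherries Hu.
have xT' : fiber (quartet_metric k l e g) x.
  by rewrite (quartet_metric_swap_cherries e g Hu).
have /(fiber_quartetE e g Hu) [_ M] := xT.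
case: (mixture_eqs_anchored g_gt0 M) => A.
- by constructor 1; exact (fiber_anchored_family Hu xT A).
- by constructor 2; exact (fiber_anchored_family Hu (fiber_swap xT) A).
- by constructor 3; exact (fiber_anchored_family Hu' xT' A).
- by constructor 4; exact (fiber_anchored_family Hu' (fiber_swap xT') A).
Qed.

Lemma fiber_family_fiber_swap_cherries m x : 0 < g ->
  fiber_family k l i j e g m x -> fiber (quartet_metric i j e g) x.
Proof.
move=> g_gt0 F; rewrite -(quartet_metric_swap_cherries e g Hu).
exact (fiber_family_fiber (uniq4_swap_cherries Hu) g_gt0 F).
Qed.

Lemma quartet_mixtureP : (forall p, 0 < e p) -> 0 < g ->
  is_mixture_of_two_stars (quartet_metric i j e g) <->
  (g < e i /\ g < e j) \/ (g < e k /\ g < e l).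
Proof.
move=> e_gt0 g_gt0; have Hu' := uniq4_swap_cherries Hu.
rewrite mixture_fiberP; split=> [[x xT] | [[gi gj] | [gk gl]]].
- by case: (fiber_classify g_gt0 xT) => -[m F];
    [left | left | right | right]; apply: deviation_family_pendant_gt F.
- have [x F] := polygon2_inhabited (fiber_family_polygon Hu ord0 e_gt0 g_gt0 gi gj).
  by exists x; exact (fiber_family_fiber Hu g_gt0 F).
- have [x F] := polygon2_inhabited (fiber_family_polygon Hu' ord0 e_gt0 g_gt0 gk gl).
  by exists x; exact (fiber_family_fiber_swap_cherries g_gt0 F).
Qed.

Lemma fiber_decomp_one_cherry : (forall p, 0 < e p) -> 0 < g ->
  g < e i -> g < e j -> ~ (g < e k /\ g < e l) ->
  fiber_decomp (quartet_metric i j e g) (fiber_family i j k l e g).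
Proof.
move=> e_gt0 g_gt0 gi gj kl_le; apply: fiber_decomp_intro.
- by move=> m; apply: fiber_family_polygon.
- by move=> m m' x; apply: deviation_family_unique.
- by move=> m m' x /(deviation_family_other_anchorings m' g_gt0) [].
- move=> x; split=> [xT | [m [F | F]]].
  + case: (fiber_classify g_gt0 xT) => -[m F]; first by exists m; left.
    * by exists m; right.
    * by case: kl_le; apply: deviation_family_pendant_gt F.
    * by case: kl_le; apply: deviation_family_pendant_gt F.
  + exact (fiber_family_fiber Hu g_gt0 F).
  + by rewrite -[x]swap_ptK; apply/fiber_swap/(fiber_family_fiber Hu g_gt0 F).
- by move=> x; exact (fiber_swap_neq Hu g_gt0).
Qed.

Lemma fiber_decomp_both_cherries : (forall p, 0 < e p) -> 0 < g ->
  g < e i -> g < e j -> g < e k -> g < e l ->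
  fiber_decomp (quartet_metric i j e g) (fun bm : bool * 'I_4 =>
    if bm.1 then fiber_family i j k l e g bm.2 else fiber_family k l i j e g bm.2).
Proof.
move=> e_gt0 g_gt0 gi gj gk gl; apply: fiber_decomp_intro.
- by move=> [[] m] /=; apply: fiber_family_polygon => //; apply: uniq4_swap_cherries.
- move=> [[] m] [[] m'] x /= F F'.
  + by rewrite (deviation_family_unique F F').
  + by have [_ + _] := deviation_family_other_anchorings m' g_gt0 F.
  + by have [_ + _] := deviation_family_other_anchorings m g_gt0 F'.
  + by rewrite (deviation_family_unique F F').
- move=> [[] m] [[] m'] x /= F.
  + by have [+ _ _] := deviation_family_other_anchorings m' g_gt0 F.
  + by have [_ _ +] := deviation_family_other_anchorings m' g_gt0 F.
  + move=> F'; have [_ _ not_F] := deviation_family_other_anchorings m g_gt0 F'.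
    exact (not_F F).
  + by have [+ _ _] := deviation_family_other_anchorings m' g_gt0 F.
- move=> x; split=> [xT | [[[] m] [F | F]]].
  + by case: (fiber_classify g_gt0 xT) => -[m F];
      [exists (true, m); left | exists (true, m); right
      | exists (false, m); left | exists (false, m); right].
  + exact (fiber_family_fiber Hu g_gt0 F).
  + by rewrite -[x]swap_ptK; apply/fiber_swap/(fiber_family_fiber Hu g_gt0 F).
  + exact (fiber_family_fiber_swap_cherries g_gt0 F).
  + rewrite -[x]swap_ptK; apply/fiber_swap.
    exact (fiber_family_fiber_swap_cherries g_gt0 F).
- by move=> x; exact (fiber_swap_neq Hu g_gt0).
Qed.

End Classification.

Theorem lemma2p6 (R : realType) :
  exists Fam : 'I_4 -> 'I_4 -> 'I_4 -> 'I_4 -> {ffun 'I_4 -> R} -> R ->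
               'I_4 -> pt R -> Prop,
    (forall (pi : {perm 'I_4}) i j k l e g m (x : pt R),
        Fam (pi i) (pi j) (pi k) (pi l) (relabel_w pi e) g m x <->
        exists y, Fam i j k l e g m y /\ x = relabel_pt pi y) /\
    forall (i j k l : 'I_4) (e : {ffun 'I_4 -> R}) (g : R),
      uniq [:: i; j; k; l] -> (forall p, 0 < e p) -> 0 < g ->
      let T := quartet_metric i j e g in
      (is_mixture_of_two_stars T <->
         (g < e i /\ g < e j) \/ (g < e k /\ g < e l)) /\
      ((g < e i /\ g < e j) /\ ~ (g < e k /\ g < e l) ->
         fiber_decomp T (Fam i j k l e g)) /\
      (~ (g < e i /\ g < e j) /\ (g < e k /\ g < e l) ->
         fiber_decomp T (Fam k l i j e g)) /\
      ((g < e i /\ g < e j) /\ (g < e k /\ g < e l) ->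
         fiber_decomp T (fun bm : bool * 'I_4 =>
           if bm.1 then Fam i j k l e g bm.2 else Fam k l i j e g bm.2)).
Proof.
exists (@fiber_family R); split=> [pi *|i j k l e g Hu e_gt0 g_gt0 T].
  exact: fiber_family_relabel.
split; last split; last split.
- exact: quartet_mixtureP.
- by case=> -[gi gj] kl_le; apply: fiber_decomp_one_cherry.
- case=> ij_le [gk gl]; rewrite /T -(quartet_metric_swap_cherries e g Hu).
  exact: fiber_decomp_one_cherry (uniq4_swap_cherries Hu) e_gt0 g_gt0 gk gl ij_le.
- by case=> -[gi gj] [gk gl]; apply: fiber_decomp_both_cherries.
Qed.
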